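(* Let $g>0$, let $F:\mathbb{R}\to\mathbb{R}$ be continuously differentiable with $F(0)=F(a)=F(1)=0$ for some $a\in\,]0,1[$, $F>0$ on $(-\infty,0[\,\cup\,]a,1[$ and $F<0$ on $]0,a[\,\cup\,]1,+\infty)$. Let $\beta>0$, let $n:\mathbb{R}\to\mathbb{R}^+$ be $\beta$-periodic and locally integrable, and let $F_0$ be the modification of $F$ described in the context. Consider the planar system \[\dot x=y,\qquad \dot y=-h(t,x),\qquad h(t,s)=-g s+n(t)F_0(s),\] and let $m\ge1$ be an integer. Then there is $R_0=R_0(m,|n|_1)>0$ such that for each initial point $z_2\in\mathbb{R}^2$ with $\|z_2\|\ge R_0$ and each $q_0\in\mathbb{R}^2$ with $\|q_0\|\le1$, the rotation number $\mathrm{rot}_m(z_2,q_0)$ is defined and \[\mathrm{rot}_m(z_2,q_0)<1.\]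
   Context: Let $\delta(s)=\max\{0,\min\{s,1\}\}$, $\ell(s)=\exp(1/s)$ for $s<0$, $\ell(s)=0$ for $0\le s\le1$, $\ell(s)=-\exp(1/(1-s))$ for $s>1$, $c_0=\max_{s\in[0,1]}|F(s)|$, and fix $0<k_0\le c_0$. Set $F_0(s)=F(\delta(s))+k_0\ell(s)$; this is a bounded, globally Lipschitz function equal to $F$ on $[0,1]$. Then every solution of the system is defined on all of $\mathbb{R}$ and unique given initial data; write $\zeta(t,0,z_0)=(x(t),y(t))$ for the solution with $\zeta(0)=z_0$. $|n|_1=\int_0^\beta n(t)\,dt$; the constant $R_0$ depends on $m$ and $|n|_1$ (given the fixed data $g,F,k_0,\beta$). For $q_0\in\mathbb{R}^2$ and $z_0$ with $\zeta(t,0,z_0)\ne q_0$ for all $t\in[0,m\beta]$, write $\zeta(t,0,z_0)-q_0=\rho(t)(\cos\theta(t),\sin\theta(t))$ with $\rho>0$ and $\theta$ continuous; the rotation number is $\mathrm{rot}_m(z_0,q_0)=\frac{\theta(0)-\theta(m\beta)}{2\pi}$, i.e. the normalized clockwise angular displacement of the solution around $q_0$ over $[0,m\beta]$. *)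

From HB Require Import structures.
From mathcomp Require Import all_boot all_order all_algebra.
From mathcomp Require Import all_classical all_reals all_analysis.
Set Implicit Arguments. Unset Strict Implicit. Unset Printing Implicit Defensive.
Import Order.TTheory GRing.Theory Num.Theory.
Import numFieldNormedType.Exports.
Local Open Scope classical_set_scope.
Local Open Scope ring_scope.

Section Defs.
Variable R : realType.

Definition delta (s : R) : R := Num.max 0 (Num.min s 1).

Definition ell (s : R) : R :=
  if s < 0 then expR (s^-1) else if s <= 1 then 0 else - expR ((1 - s)^-1).

(* c0 = max_{s in [0,1]} |F(s)|  (written as a sup, attained for continuous F) *)
Definition c0 (F : R -> R) : R := sup [set `|F s| | s in `[0, 1]].

Definition F0 (F : R -> R) (k0 : R) (s : R) : R := F (delta s) + k0 * ell s.

Definition hfun (g : R) (n : R -> R) (F : R -> R) (k0 : R) (t s : R) : R :=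
  - g * s + n t * F0 F k0 s.

Definition oint (f : R -> R) (t : R) : R :=
  if 0 <= t then Rintegral lebesgue_measure `[0, t] f
  else - Rintegral lebesgue_measure `[t, 0] f.

(* Caratheodory solution on all of R of  x' = y, y' = - h(t,x),
   i.e. zeta = (x,y) is continuous, the right-hand sides are locally
   integrable along zeta, and zeta(t) = zeta(0) + int_0^t (rhs). *)
Definition is_solution (g : R) (n : R -> R) (F : R -> R) (k0 : R)
    (zeta : R -> R * R) : Prop :=
  let x := fun t => (zeta t).1 in
  let y := fun t => (zeta t).2 in
  let rhs := fun t => - hfun g n F k0 t (x t) in
  continuous x /\ continuous y /\
  (forall a b : R, lebesgue_measure.-integrable `[a, b] (fun t => (y t)%:E)) /\
  (forall a b : R, lebesgue_measure.-integrable `[a, b] (fun t => (rhs t)%:E)) /\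
  (forall t, x t = x 0 + oint y t) /\
  (forall t, y t = y 0 + oint rhs t).

Definition norm2 (z : R * R) : R := Num.sqrt (z.1 ^+ 2 + z.2 ^+ 2).

Definition is_angle_lift (zeta : R -> R * R) (q0 : R * R) (T : R)
    (rho theta : R -> R) : Prop :=
  {within `[0, T], continuous theta} /\
  forall t, t \in `[0, T] ->
    0 < rho t /\
    (zeta t).1 - q0.1 = rho t * cos (theta t) /\
    (zeta t).2 - q0.2 = rho t * sin (theta t).

Definition rot_of (theta : R -> R) (T : R) : R :=
  (theta 0 - theta T) / (2 * pi).

End Defs.

From HB Require Import structures.
From mathcomp Require Import all_boot all_order all_algebra.
From mathcomp Require Import all_classical all_reals all_analysis.
From mathcomp Require Import lra ring.
Set Implicit Arguments. Unset Strict Implicit. Unset Printing Implicit Defensive.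
Import Order.TTheory GRing.Theory Num.Theory.
Import numFieldNormedType.Exports.
Local Open Scope classical_set_scope.
Local Open Scope ring_scope.

(** With c = sqrt g, the saddle coordinates y + c x and y - c x of the
    linearisation x'' = g x satisfy (y +- c x)' = +- c (y +- c x) + O(n),
    because F0 is bounded.  A point of large norm has one of +-(y + c x),
    +-(y - c x) large.  A large unstable coordinate stays large since its drift
    is at least -M n, whose integral over [0, m beta] is at most M m |n|_1; a
    large stable coordinate can at most halve (up to a constant) on each of
    finitely many subintervals of length <= 1 / (2 c).  So the solution stays in
    an open half-plane avoiding q0 and a ray from q0, and a continuous angle
    around q0 cannot then decrease by 2 pi. *)

Section interval_integral.
Variable R : realType.
Local Notation mu := (@lebesgue_measure R).

Lemma integrable_itv_cc_oc (f : R -> R) (s t : R) :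
  mu.-integrable `[s, t] (EFin \o f) -> mu.-integrable `]s, t] (EFin \o f).
Proof. by apply: integrableS => // x /=; rewrite !in_itv /= => /andP[/ltW -> ->]. Qed.

Lemma integrable_itv_oc_cst (k s t : R) : mu.-integrable `]s, t] (EFin \o cst k).
Proof.
apply: integrable_itv_cc_oc; apply: continuous_compact_integrable; first exact: segment_compact.
exact/continuous_subspaceT/cst_continuous.
Qed.

Lemma Rintegral_itv_oc_cst (k s t : R) : s <= t -> Rintegral mu `]s, t] (cst k) = k * (t - s).
Proof.
move=> st; rewrite Rintegral_cst //; have := lebesgue_measure_itv `]s, t].
rewrite /= lte_fin => ->.
by case: ltgtP st => [st _|//|-> _]; rewrite ?subrr ?mulr0.
Qed.

Lemma integrable_itv_oc_comb (f1 f2 : R -> R) (a1 a2 s t : R) :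
  mu.-integrable `]s, t] (EFin \o f1) -> mu.-integrable `]s, t] (EFin \o f2) ->
  mu.-integrable `]s, t] (EFin \o (fun x => a1 * f1 x + a2 * f2 x)).
Proof.
move=> if1 if2.
exact: eq_integrable (integrableD _ (integrableZl _ a1 if1) (integrableZl _ a2 if2)).
Qed.

Lemma Rintegral_itv_oc_comb (f1 f2 : R -> R) (a1 a2 s t : R) :
  mu.-integrable `]s, t] (EFin \o f1) -> mu.-integrable `]s, t] (EFin \o f2) ->
  Rintegral mu `]s, t] (fun x => a1 * f1 x + a2 * f2 x) =
  a1 * Rintegral mu `]s, t] f1 + a2 * Rintegral mu `]s, t] f2.
Proof.
move=> if1 if2; rewrite RintegralD ?RintegralZl //.
- exact: eq_integrable (integrableZl _ a1 if1).
- exact: eq_integrable (integrableZl _ a2 if2).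
Qed.

Lemma integrable_itv_oc_affine (f : R -> R) (a b s t : R) :
  mu.-integrable `]s, t] (EFin \o f) ->
  mu.-integrable `]s, t] (EFin \o (fun x => a + b * f x)).
Proof.
move=> intf; have := integrable_itv_oc_comb a b (integrable_itv_oc_cst 1 s t) intf.
by apply: eq_integrable => // x _; rewrite /= mulr1.
Qed.

Lemma Rintegral_itv_oc_affine (f : R -> R) (a b s t : R) : s <= t ->
  mu.-integrable `]s, t] (EFin \o f) ->
  Rintegral mu `]s, t] (fun x => a + b * f x) =
  a * (t - s) + b * Rintegral mu `]s, t] f.
Proof.
move=> st intf; transitivity (Rintegral mu `]s, t] (fun x => a * cst 1 x + b * f x)).
  by apply: eq_Rintegral => x _; rewrite /= mulr1.
by rewrite Rintegral_itv_oc_comb ?Rintegral_itv_oc_cst ?mul1r //; exact: integrable_itv_oc_cst.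
Qed.

Lemma Rintegral_itv0B (f : R -> R) (s t : R) : 0 <= s <= t ->
  mu.-integrable `[0, t] (EFin \o f) ->
  Rintegral mu `[0, t] f - Rintegral mu `[0, s] f = Rintegral mu `]s, t] f.
Proof. by move=> /andP[s0 st] intf; rewrite Rintegral_itvB // bnd_simp. Qed.

Lemma measurable_addr (h : R) : measurable_fun [set: measurableTypeR R] (+%R^~ h).
Proof. by apply: measurable_realfun.measurable_funD => //; exact: measurable_cst. Qed.

Lemma lebesgue_measure_addr (h : R) (A : set (measurableTypeR R)) : measurable A ->
  pushforward mu (+%R^~ h : measurableTypeR R -> measurableTypeR R) A = mu A.
Proof.
move=> mA; apply: esym; apply: lebesgue_measure_unique => //=; first exact: measurable_addr.
move=> _ _ [[a b] _ <-]; rewrite /pushforward.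
have -> : +%R^~ h @^-1` [set` `]a, b]] = [set` `](a - h), (b - h)]].
  by apply/seteqP; split => x /=; rewrite !in_itv /= ltrBlDr lerBrDr.
rewrite !lebesgue_measure_itv /= !lte_fin ltrD2r.
by case: ifPn => // _; congr (_%:E); ring.
Qed.

Lemma Rintegral_itv_oc_addr (f : R -> R) (h a b : R) : (forall x, 0 <= f x) ->
  mu.-integrable `]a + h, b + h] (EFin \o f) ->
  Rintegral mu `]a + h, b + h] f = Rintegral mu `]a, b] (fun x => f (x + h)).
Proof.
move=> f0 intf; rewrite /Rintegral; congr fine.
have -> : `]a, b]%classic = +%R^~ h @^-1` `]a + h, b + h].
  by apply/seteqP; split => x /=; rewrite !in_itv /= ltrD2r lerD2r.
rewrite -(ge0_integral_pushforward (phi := +%R^~ h : measurableTypeR R -> measurableTypeR R)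
  _ _ (f := EFin \o f)) //=.
- apply: eq_measure_integral; first exact: measurable_addr.
  by move=> mf A mA _; exact/esym/lebesgue_measure_addr.
- exact: measurable_addr.
- by case/integrableP : intf.
- by move=> y _; rewrite lee_fin.
Qed.

Section periodic_integral.
Variables (n : R -> R) (p L : R).
Hypotheses (p_ge0 : 0 <= p) (n_ge0 : forall t, 0 <= n t)
  (n_periodic : forall t, n (t + p) = n t)
  (n_int : forall a b, mu.-integrable `[a, b] (EFin \o n))
  (n_period : Rintegral mu `[0, p] n = L).

Lemma periodicn_addr (k : nat) (x : R) : n (x + k%:R * p) = n x.
Proof.
elim: k x => [|k IHk] x; first by rewrite mul0r addr0.
by rewrite -natr1 mulrDl mul1r addrA n_periodic IHk.
Qed.

Lemma Rintegral_period (k : nat) : Rintegral mu `]k%:R * p, k.+1%:R * p] n = L.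
Proof.
have -> : k.+1%:R * p = p + k%:R * p by rewrite -natr1 mulrDl mul1r addrC.
rewrite -[X in `]X, _]]add0r Rintegral_itv_oc_addr //; last first.
  by rewrite add0r; exact/integrable_itv_cc_oc/n_int.
rewrite (@eq_Rintegral _ _ _ mu _ n) => [|x _]; last exact: periodicn_addr.
by rewrite Rintegral_itv_obnd_cbnd //; exact/integrable_itv_cc_oc/n_int.
Qed.

Lemma Rintegral_periods (k : nat) : Rintegral mu `[0, k%:R * p] n = k%:R * L.
Proof.
elim: k => [|k IHk]; first by rewrite !mul0r set_itv1 Rintegral_set1.
have k_le : 0 <= k%:R * p <= k.+1%:R * p by rewrite mulr_ge0 ?ler_wpM2r ?ler_nat.
have := Rintegral_itv0B k_le (n_int 0 (k.+1%:R * p)).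
rewrite IHk Rintegral_period -natr1 mulrDl mul1r; lra.
Qed.

Lemma Rintegral_periodic_le (m : nat) (s t : R) : 0 <= s <= t -> t <= m%:R * p ->
  Rintegral mu `]s, t] n <= m%:R * L.
Proof.
move=> /andP[s0 st] tmp; have t0 := le_trans s0 st.
rewrite -Rintegral_periods -(Rintegral_itv0B _ (n_int _ _)) ?s0 ?st //.
have := Rintegral_itv0B (f := n) (s := t) (t := m%:R * p).
rewrite t0 tmp => /(_ isT (n_int _ _)).
have : 0 <= Rintegral mu `]t, m%:R * p] n by apply: Rintegral_ge0.
have : 0 <= Rintegral mu `[0, s] n by apply: Rintegral_ge0.
lra.
Qed.

End periodic_integral.
End interval_integral.

Section linear_drift.
Variable R : realType.
Local Notation mu := (@lebesgue_measure R).

Lemma continuous_induction_gt (v : R -> R) (a b Y : R) : continuous v -> Y < v a ->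
  (forall t, a <= t <= b -> (forall s, a <= s <= t -> Y <= v s) -> Y < v t) ->
  forall t, a <= t <= b -> Y < v t.
Proof.
move=> v_cont va step t1 /andP[at1 t1b]; rewrite ltNge; apply/negP => vt1.
pose S := [set s | a <= s <= b /\ v s <= Y].
have S_t1 : S t1 by split => //; apply/andP.
have S_lb : lbound S a by move=> s [/andP[]].
have S_hlb : has_lbound S by exists a.
pose i := inf S.
have ai : a <= i by apply: lb_le_inf => //; exists t1.
have it1 : i <= t1 by apply: ge_inf.
have below_i : forall s, a <= s -> s < i -> Y < v s.
  move=> s a_s si; rewrite ltNge; apply/negP => vs.
  have : i <= s by apply: ge_inf => //; split => //; rewrite a_s /=; lra.
  by rewrite leNgt si.
have Y_le_vi : Y <= v i.
  rewrite leNgt; apply/negP => vi.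
  have [|c /[!in_itv] /= /andP[ac ci] vc] := IVT ai (continuous_subspaceT v_cont) (v := Y).
    by rewrite ge_min le_max (ltW vi) (ltW va) orbT.
  have : c < i by rewrite lt_neqAle ci andbT; apply/eqP => ci'; move: vi; rewrite -ci' vc ltxx.
  by move=> /(below_i c ac); rewrite vc ltxx.
have Y_lt_vi : Y < v i.
  apply: step; first by rewrite ai /= (le_trans it1).
  move=> s /andP[a_s]; rewrite le_eqVlt => /orP[/eqP -> //|si].
  exact/ltW/below_i.
have [e /= e0 near_i] := (nbhs_ballP _ _).1 (cvgr_gt (v i) (v_cont i) Y Y_lt_vi).
have [s Ss sie] := inf_adherent e0 (conj (ex_intro _ t1 S_t1) S_hlb).
have i_s : i <= s by exact: ge_inf.
have : Y < v s by apply: near_i; rewrite /ball /= distrC ger0_norm ?subr_ge0 // ltrBlDl.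
by case: Ss => _ vs; rewrite ltNge vs.
Qed.

Variables (v f n : R -> R) (c M B T : R).
Hypotheses (v_cont : continuous v) (c_ge0 : 0 <= c) (M_ge0 : 0 <= M) (B_ge0 : 0 <= B)
  (f_int : forall s t, mu.-integrable `]s, t] (EFin \o f))
  (n_int : forall s t, mu.-integrable `]s, t] (EFin \o n))
  (vB : forall s t, 0 <= s <= t -> t <= T -> v t - v s = Rintegral mu `]s, t] f)
  (n_le : forall s t, 0 <= s <= t -> t <= T -> Rintegral mu `]s, t] n <= B).

Let Mn_le s t : 0 <= s <= t -> t <= T -> M * Rintegral mu `]s, t] n <= M * B.
Proof. by move=> st tT; rewrite ler_wpM2l // n_le. Qed.

Lemma unstable_drift_gt (Y : R) : (forall t, `|f t - c * v t| <= M * n t) ->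
  0 <= Y -> Y + M * B < v 0 -> forall t, 0 <= t <= T -> Y < v t.
Proof.
move=> f_dev Y_ge0 v0 t t0T.
apply: (continuous_induction_gt v_cont _ _ t0T); first by have := mulr_ge0 M_ge0 B_ge0; lra.
move=> u /andP[u0 uT] v_ge.
have : Rintegral mu `]0, u] (fun x => c * Y + (- M) * n x) <= Rintegral mu `]0, u] f.
  apply: le_Rintegral => //; first exact: integrable_itv_oc_affine.
  move=> x /= /[!in_itv] /= /andP[x0 xu]; have := f_dev x; rewrite ler_norml mulNr.
  have := ler_wpM2l c_ge0 (v_ge x _); rewrite (ltW x0) xu => /(_ isT); lra.
rewrite Rintegral_itv_oc_affine // -vB ?lexx ?u0 //.
have := @Mn_le 0 u; rewrite lexx u0 => /(_ isT uT).
have := mulr_ge0 (mulr_ge0 c_ge0 Y_ge0) u0; lra.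
Qed.

Section stable_drift.
Hypothesis f_dev : forall t, `|f t + c * v t| <= M * n t.
Let C := 4 * (M * B) + 2.

Lemma stable_drift_step (s d : R) : c * d <= 1 / 2 -> 0 <= s -> s + d <= T ->
  C <= v s -> forall t, s <= t <= s + d -> (v s - C) / 2 < v t.
Proof.
move=> cd s0 sdT Cv t tsd; set Y := (v s - C) / 2.
have K_ge0 : 0 <= M * B by rewrite mulr_ge0.
have C_gt0 : 0 < C by rewrite /C; lra.
have Y_ge0 : 0 <= Y by rewrite /Y; lra.
apply: (continuous_induction_gt v_cont _ _ tsd); first by rewrite /Y; lra.
move=> u /andP[su usd] v_ge.
have v_le x : s < x <= u -> v x <= v s + M * B.
  move=> /andP[sx xu]; have sx' : 0 <= s <= x by rewrite s0 ltW.
  have : Rintegral mu `]s, x] f <= Rintegral mu `]s, x] (fun y => - (c * Y) + M * n y).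
    apply: le_Rintegral => //; first exact: integrable_itv_oc_affine.
    move=> y /= /[!in_itv] /= /andP[sy yx]; have := f_dev y; rewrite ler_norml.
    have := ler_wpM2l c_ge0 (v_ge y _); rewrite (ltW sy) (le_trans yx xu) => /(_ isT); lra.
  have xT : x <= T by lra.
  rewrite Rintegral_itv_oc_affine ?(ltW sx) // -vB //.
  have := Mn_le sx' xT.
  have : 0 <= c * Y * (x - s) by apply: mulr_ge0; [exact: mulr_ge0 | lra].
  lra.
have : Rintegral mu `]s, u] (fun y => - (c * (v s + M * B)) + (- M) * n y)
    <= Rintegral mu `]s, u] f.
  apply: le_Rintegral => //; first exact: integrable_itv_oc_affine.
  move=> y /= /[!in_itv] /= ysu; have := f_dev y; rewrite ler_norml.
  have := ler_wpM2l c_ge0 (v_le y ysu); lra.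
have su' : 0 <= s <= u by rewrite s0 su.
have uT : u <= T by lra.
rewrite Rintegral_itv_oc_affine // -vB //.
have := Mn_le su' uT.
have : c * (v s + M * B) * (u - s) <= (v s + M * B) / 2.
  have : c * (u - s) <= 1 / 2 by apply: le_trans cd; rewrite ler_wpM2l //; lra.
  have : 0 <= v s + M * B by rewrite /C in Cv; lra.
  nra.
rewrite /Y /C mulNr mulNr; lra.
Qed.

Lemma stable_drift_ge (W : R) (N : nat) : (0 < N)%N -> 2 * c * T <= N%:R -> 0 <= W ->
  2 ^+ N * (W + C) - C <= v 0 -> forall t, 0 <= t <= T -> W <= v t.
Proof.
move=> N_gt0 cTN W_ge0 v0 t /andP[t0 tT].
have C_ge0 : 0 <= C by rewrite /C; have := mulr_ge0 M_ge0 B_ge0; lra.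
pose d := T / N%:R.
have N_gt0' : 0 < N%:R :> R by rewrite ltr0n.
have d_ge0 : 0 <= d by apply: divr_ge0; [exact: le_trans tT | exact: ltW].
have Nd : N%:R * d = T by rewrite mulrC -mulrA mulVf ?mulr1 ?gt_eqF.
have cd : c * d <= 1 / 2 by rewrite mulrA ler_pdivrMr //; lra.
have two_pow k : 0 < 2 ^+ k :> R by rewrite exprn_gt0.
(* Since (u - C) / 2 = (u + C) / 2 - C, k steps of stable_drift_step
   starting from v 0 give the bound (v 0 + C) / 2 ^+ k - C. *)
suff steps k : (k <= N)%N -> forall t, 0 <= t <= k%:R * d -> (v 0 + C) / 2 ^+ k - C <= v t.
  have : W + C <= (v 0 + C) / 2 ^+ N by rewrite ler_pdivlMr //; lra.
  have := steps N (leqnn N) t; rewrite Nd t0 tT => /(_ isT); lra.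
elim: k => [_ t' |k IHk kN t'].
  rewrite mul0r => t'0; have -> : t' = 0 by apply/le_anti; rewrite andbC.
  by rewrite expr0 divr1 addrK.
have kd_ge0 : 0 <= k%:R * d by rewrite mulr_ge0.
have halve u : (u + C) / 2 ^+ k.+1 - C = ((u + C) / 2 ^+ k - C - C) / 2.
  by rewrite exprSr invfM mulrA; field.
have big : 2 * (W + C) <= (v 0 + C) / 2 ^+ k.
  have pow_le : 2 ^+ k.+1 <= 2 ^+ N :> R by apply: ler_weXn2l; rewrite ?ler1n.
  rewrite ler_pdivlMr // mulrAC -exprS.
  have := ler_wpM2r (addr_ge0 W_ge0 C_ge0) pow_le; lra.
have {}IHk := IHk (ltnW kN).
move=> /andP[t'0 t'k1]; rewrite halve.
have [t'kd|kdt'] := leP t' (k%:R * d).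
  by have := IHk t'; rewrite t'0 t'kd => /(_ isT); lra.
have vkd : (v 0 + C) / 2 ^+ k - C <= v (k%:R * d) by apply: IHk; rewrite kd_ge0 lexx.
have C_le : C <= v (k%:R * d) by lra.
have kd1 : k%:R * d + d = k.+1%:R * d by rewrite -natr1 mulrDl mul1r.
have kdT : k%:R * d + d <= T by rewrite kd1 -Nd ler_wpM2r // ler_nat.
have := stable_drift_step cd kd_ge0 kdT C_le (t := t').
rewrite (ltW kdt') kd1 t'k1 => /(_ isT); lra.
Qed.

End stable_drift.
End linear_drift.

Section winding.
Variable R : realType.

Lemma periodicz (V : zmodType) (f : R -> V) (p : R) : periodic f p ->
  forall (z : int) (a : R), f (a + z%:~R * p) = f a.
Proof.
move=> f_per [] k a; rewrite ?NegzE ?mulrNz ?mulNr -pmulrn mulr_natl.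
  exact: periodicn.
by rewrite -[in RHS](subrK (p *+ k.+1) a) periodicn.
Qed.

Lemma rot_of_lt1 (zeta : R -> R * R) (q0 : R * R) (T p : R) (rho theta : R -> R) :
  0 <= T ->
  (forall t r, t \in `[0, T] -> 0 < r -> zeta t <> (q0.1 + r * cos p, q0.2 + r * sin p)) ->
  is_angle_lift zeta q0 T rho theta -> rot_of theta T < 1.
Proof.
move=> T_ge0 avoid [theta_cont polar].
have two_pi_gt0 : 0 < pi *+ 2 :> R by rewrite mulrn_wgt0 // pi_gt0.
rewrite /rot_of mulr_natl ltr_pdivrMr // mul1r.
rewrite ltNge; apply/negP => wind.
pose z := Num.floor ((theta 0 - p) / (pi *+ 2)).
pose psi := p + z%:~R * (pi *+ 2).
have psi_le : psi <= theta 0.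
  have : z%:~R * (pi *+ 2) <= theta 0 - p by rewrite -ler_pdivlMr // -RfloorE Rfloor_le.
  rewrite /psi; lra.
have psi_gt : theta 0 - pi *+ 2 < psi.
  have : theta 0 - p < (z%:~R + 1) * (pi *+ 2).
    by rewrite -ltr_pdivrMr // -RfloorE lt_succ_Rfloor.
  rewrite /psi; lra.
have [t t_in theta_t] : exists2 t, t \in `[0, T] & theta t = psi.
  apply: IVT => //; rewrite ge_min le_max psi_le /= andbT; apply/orP; right; lra.
have [rho_gt0 [zeta1 zeta2]] := polar t t_in.
apply: (avoid t (rho t) t_in rho_gt0).
rewrite -(periodicz (@cosD2pi R) z p) -(periodicz (@sinD2pi R) z p) -/psi -theta_t.
by case: (zeta t) zeta1 zeta2 => x y /= <- <-; rewrite !subrKC.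
Qed.

Lemma halfplane_rot_of_lt1 (zeta : R -> R * R) (q0 : R * R) (T a1 a2 U p : R) :
  0 <= T -> a1 * q0.1 + a2 * q0.2 <= U -> a1 * cos p + a2 * sin p <= 0 ->
  (forall t, t \in `[0, T] -> U < a1 * (zeta t).1 + a2 * (zeta t).2) ->
  (forall t, t \in `[0, T] -> zeta t <> q0) /\
  (forall rho theta, is_angle_lift zeta q0 T rho theta -> rot_of theta T < 1).
Proof.
move=> T_ge0 q0_le dir_le zeta_gt; split.
  by move=> t /zeta_gt + zeta_t; rewrite zeta_t; lra.
move=> rho theta; apply: rot_of_lt1 => // t r t_in r_gt0 zeta_t.
move: (zeta_gt t t_in); rewrite zeta_t /=.
have : r * (a1 * cos p + a2 * sin p) <= 0 by rewrite pmulr_rle0.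
lra.
Qed.

End winding.

Section plane.
Variable R : realType.

Lemma normr_fst_le_norm2 (z : R * R) : `|z.1| <= norm2 z.
Proof. by rewrite -sqrtr_sqr ler_wsqrtr // lerDl sqr_ge0. Qed.

Lemma normr_snd_le_norm2 (z : R * R) : `|z.2| <= norm2 z.
Proof. by rewrite -sqrtr_sqr ler_wsqrtr // lerDr sqr_ge0. Qed.

Lemma norm2_le_normrD (z : R * R) : norm2 z <= `|z.1| + `|z.2|.
Proof.
rewrite /norm2 -[X in _ <= X]ger0_norm ?addr_ge0 // -sqrtr_sqr ler_wsqrtr //.
rewrite sqrrD !real_normK ?num_real //.
have : 0 <= `|z.1| * `|z.2| *+ 2 by rewrite mulrn_wge0 // mulr_ge0.
lra.
Qed.

(* The linearisation x' = y, y' = c ^+ 2 x is a saddle: y + c x grows like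
   exp(c t) and y - c x decays like exp(- c t). *)
Definition saddle_coord (c : R) (b1 b2 : bool) (z : R * R) : R :=
  (-1) ^+ b1 * (z.2 + (-1) ^+ b2 * c * z.1).

Lemma saddle_coord_large (c A : R) (z : R * R) : 0 < c -> A + A / c <= norm2 z ->
  exists b1 b2, A <= saddle_coord c b1 b2 z.
Proof.
move=> c_gt0 z_large; rewrite /saddle_coord.
have [A_le|lt_A] := lerP A `|z.2 + c * z.1|.
  by exists (z.2 + c * z.1 < 0), false; rewrite expr0 mul1r; move: A_le; rewrite normrEsign.
have [A_le|lt_A'] := lerP A `|z.2 - c * z.1|.
  by exists (z.2 - c * z.1 < 0), true; rewrite expr1 mulN1r mulNr; move: A_le; rewrite normrEsign.
move: lt_A lt_A'; rewrite !ltr_norml => /andP[? ?] /andP[? ?].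
have : `|z.1| < A / c.
  rewrite ltr_pdivlMr // -[c in _ * c](gtr0_norm c_gt0) -normrM ltr_norml.
  by apply/andP; lra.
have : `|z.2| < A by rewrite ltr_norml; apply/andP; lra.
have := norm2_le_normrD z; lra.
Qed.

Lemma saddle_coord_rot_of_lt1 (zeta : R -> R * R) (q0 : R * R) (T c U : R) (b1 b2 : bool) :
  0 <= T -> 0 <= c -> norm2 q0 <= 1 -> 1 + c <= U ->
  (forall t, t \in `[0, T] -> U < saddle_coord c b1 b2 (zeta t)) ->
  (forall t, t \in `[0, T] -> zeta t <> q0) /\
  (forall rho theta, is_angle_lift zeta q0 T rho theta -> rot_of theta T < 1).
Proof.
move=> T_ge0 c_ge0 q0_le1 cU zeta_gt.
have := le_trans (normr_fst_le_norm2 q0) q0_le1; rewrite ler_norml => /andP[? ?].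
have := le_trans (normr_snd_le_norm2 q0) q0_le1; rewrite ler_norml => /andP[? ?].
apply: (halfplane_rot_of_lt1 (a1 := (-1) ^+ b1 * (-1) ^+ b2 * c) (a2 := (-1) ^+ b1)
  (U := U) (p := if b1 (+) b2 then 0 else pi)) => //.
- by case: b1 b2 zeta_gt => [] [] _; rewrite /= ?expr0 ?expr1; nra.
- by case: b1 b2 zeta_gt => [] [] _; rewrite /= ?expr0 ?expr1 ?cos0 ?sin0 ?cospi ?sinpi; lra.
- by move=> t /zeta_gt; rewrite /saddle_coord; congr (_ < _); ring.
Qed.

End plane.

Section nonlinearity.
Variable R : realType.

Lemma normr_ell_le1 (s : R) : `|ell s| <= 1.
Proof.
rewrite /ell; case: ifPn => [s_lt0|_].
  by rewrite ger0_norm ?expR_ge0 // expR_le1 ltW // invr_lt0.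
case: ifPn => [_|]; first by rewrite normr0.
rewrite -ltNge => s_gt1; rewrite normrN ger0_norm ?expR_ge0 // expR_le1 ltW //.
by rewrite invr_lt0 subr_lt0.
Qed.

Lemma delta_itv (s : R) : delta s \in `[0, 1].
Proof. by rewrite /delta in_itv /= le_max lexx /= ge_max ler01 /= ge_min lexx orbT. Qed.

Lemma F0_bounded (F : R -> R) (k0 : R) : {within `[0, 1], continuous F} ->
  exists M, forall s, `|F0 F k0 s| <= M.
Proof.
move=> F_cont.
have [s1 _ F_le] := EVT_max ler01 F_cont.
have [s2 _ F_ge] := EVT_min ler01 F_cont.
exists (`|F s1| + `|F s2| + `|k0|) => s; apply: (le_trans (ler_normD _ _)); apply: lerD.
  have := F_le _ (delta_itv s); have := F_ge _ (delta_itv s).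
  have := ler_norm (F s1); have := ler_norm (- F s2); rewrite normrN.
  have := normr_ge0 (F s1); have := normr_ge0 (F s2).
  rewrite ler_norml; lra.
by rewrite normrM -[X in _ <= X]mulr1 ler_wpM2l // normr_ell_le1.
Qed.

End nonlinearity.

(* The first entry serves the unstable coordinate (unstable_drift_gt), the
   second the stable one (stable_drift_ge with N = truncn (2 c T) + 1 steps). *)
Definition escape_threshold (R : realType) (c T K U : R) : R :=
  Num.max (U + K + 1)
    (2 ^+ (Num.truncn (2 * c * T)).+1 * (U + 1 + (4 * K + 2)) - (4 * K + 2)).

Section solution.
Variables (R : realType) (g k0 : R) (n F : R -> R) (zeta : R -> R * R).
Hypothesis zeta_sol : is_solution g n F k0 zeta.
Local Notation mu := (@lebesgue_measure R).
Local Notation rhs := (fun u => - hfun g n F k0 u (zeta u).1).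

Let y_integrable (s t : R) : mu.-integrable `]s, t] (EFin \o (fun u => (zeta u).2)).
Proof. by case: zeta_sol => _ [_ [y_int _]]; exact/integrable_itv_cc_oc/y_int. Qed.

Let rhs_integrable (s t : R) : mu.-integrable `]s, t] (EFin \o rhs).
Proof. by case: zeta_sol => _ [_ [_ [rhs_int _]]]; exact/integrable_itv_cc_oc/rhs_int. Qed.

Lemma solution_increment1 (s t : R) : 0 <= s <= t ->
  (zeta t).1 - (zeta s).1 = Rintegral mu `]s, t] (fun u => (zeta u).2).
Proof.
case: zeta_sol => _ [_ [y_int [_ [x_eq _]]]] /[dup] st /andP[s0 /(le_trans s0) t0].
rewrite x_eq [in X in _ - X]x_eq /oint t0 s0 -(Rintegral_itv0B st (y_int 0 t)).
by rewrite opprD addrACA subrr add0r.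
Qed.

Lemma solution_increment2 (s t : R) : 0 <= s <= t ->
  (zeta t).2 - (zeta s).2 = Rintegral mu `]s, t] rhs.
Proof.
case: zeta_sol => _ [_ [_ [rhs_int [_ y_eq]]]] /[dup] st /andP[s0 /(le_trans s0) t0].
rewrite y_eq [in X in _ - X]y_eq /oint t0 s0 -(Rintegral_itv0B st (rhs_int 0 t)).
by rewrite opprD addrACA subrr add0r.
Qed.

Variables (c M : R) (b1 : bool).
Hypotheses (c2 : c ^+ 2 = g) (F0_le : forall s, `|F0 F k0 s| <= M) (n_ge0 : forall t, 0 <= n t).
Local Notation v b2 := (fun t => saddle_coord c b1 b2 (zeta t)).

Lemma saddle_coord_continuous (b2 : bool) : continuous (v b2).
Proof.
case: zeta_sol => x_cont [y_cont _] t; rewrite /saddle_coord.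
apply: cvgM; first exact: cvg_cst.
by apply: cvgD; [exact: y_cont | apply: cvgM; [exact: cvg_cst | exact: x_cont]].
Qed.

(* v' = (-1) ^+ b2 * c * v - (-1) ^+ b1 * n F0(x) along the solution, since c ^+ 2 = g. *)
Lemma saddle_coord_drift (b2 : bool) : exists f : R -> R,
  [/\ forall s t, mu.-integrable `]s, t] (EFin \o f),
      forall s t, 0 <= s <= t -> v b2 t - v b2 s = Rintegral mu `]s, t] f &
      forall t, `|f t - (-1) ^+ b2 * c * v b2 t| <= M * n t].
Proof.
exists (fun u => (-1) ^+ b1 * rhs u + (-1) ^+ b1 * (-1) ^+ b2 * c * (zeta u).2); split.
- by move=> s t; apply: integrable_itv_oc_comb.
- move=> s t st; rewrite Rintegral_itv_oc_comb //.
  by rewrite -solution_increment1 // -solution_increment2 // /saddle_coord; ring.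
- move=> t.
  have -> : (-1) ^+ b1 * rhs t + (-1) ^+ b1 * (-1) ^+ b2 * c * (zeta t).2
      - (-1) ^+ b2 * c * v b2 t = - ((-1) ^+ b1 * (n t * F0 F k0 (zeta t).1)).
    by rewrite /saddle_coord /hfun -c2; case: b1 b2 => [] []; rewrite /= ?expr0 ?expr1; ring.
  rewrite normrN normrM normr_sign mul1r normrM (ger0_norm (n_ge0 t)) mulrC.
  by rewrite ler_wpM2r.
Qed.

Lemma saddle_coord_escape (b2 : bool) (B T : R) : 0 < c -> 0 <= B ->
  (forall s t, mu.-integrable `]s, t] (EFin \o n)) ->
  (forall s t, 0 <= s <= t -> t <= T -> Rintegral mu `]s, t] n <= B) ->
  escape_threshold c T (M * B) (1 + c) <= v b2 0 ->
  forall t, 0 <= t <= T -> 1 + c < v b2 t.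
Proof.
move=> c_gt0 B_ge0 n_int n_le.
rewrite /escape_threshold ge_max => /andP[v0_unstable v0_stable].
have M_ge0 : 0 <= M := le_trans (normr_ge0 _) (F0_le 0).
have [f [f_int vB f_dev]] := saddle_coord_drift b2.
have {}vB s t : 0 <= s <= t -> t <= T -> v b2 t - v b2 s = Rintegral mu `]s, t] f.
  by move=> st _; exact: vB.
have K_ge0 : 0 <= M * B by rewrite mulr_ge0.
case: b2 f_dev vB v0_unstable v0_stable => f_dev vB v0_unstable v0_stable t t0T.
  apply: (lt_le_trans _ (stable_drift_ge (@saddle_coord_continuous true) (ltW c_gt0)
    M_ge0 B_ge0 f_int n_int vB n_le _ (ltn0Sn _) _ _ v0_stable t0T)); first lra.
  - by move=> u; have := f_dev u; rewrite expr1 mulN1r mulNr opprK.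
  - by apply/ltW/truncnS_gt.
  - by lra.
apply: (unstable_drift_gt (@saddle_coord_continuous false) (ltW c_gt0) M_ge0 B_ge0
  f_int n_int vB n_le _ _ _ t0T).
- by move=> u; have := f_dev u; rewrite expr0 mul1r.
- by lra.
- by lra.
Qed.

End solution.

Theorem lemma2 (R : realType) (g : R) (F : R -> R) (a k0 beta : R) (m : nat) (L : R) :
  0 < g ->
  (forall s, derivable F s 1) -> continuous (derive1 F) ->
  0 < a < 1 -> F 0 = 0 -> F a = 0 -> F 1 = 0 ->
  (forall s, s < 0 -> 0 < F s) -> (forall s, a < s < 1 -> 0 < F s) ->
  (forall s, 0 < s < a -> F s < 0) -> (forall s, 1 < s -> F s < 0) ->
  0 < k0 -> k0 <= c0 F ->
  0 < beta -> (1 <= m)%N ->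
  exists R0 : R, 0 < R0 /\
    forall n : R -> R,
      (forall t, 0 <= n t) ->
      (forall t, n (t + beta) = n t) ->
      (forall u v : R, lebesgue_measure.-integrable `[u, v] (fun t => (n t)%:E)) ->
      Rintegral lebesgue_measure `[0, beta] n = L ->
    forall (z2 q0 : R * R), R0 <= norm2 z2 -> norm2 q0 <= 1 ->
    forall zeta : R -> R * R,
      is_solution g n F k0 zeta -> zeta 0 = z2 ->
      (forall t, t \in `[0, m%:R * beta] -> zeta t <> q0) /\
      (forall rho theta : R -> R,
         is_angle_lift zeta q0 (m%:R * beta) rho theta ->
         rot_of theta (m%:R * beta) < 1).
Proof.
move=> g_gt0 F_der _ _ _ _ _ _ _ _ _ _ _ beta_gt0 _.
have [M F0_le] : exists M, forall s, `|F0 F k0 s| <= M.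
  by apply: F0_bounded; apply: derivable_within_continuous => s _; exact: F_der.
have M_ge0 : 0 <= M := le_trans (normr_ge0 _) (F0_le 0).
pose c := Num.sqrt g; have c_gt0 : 0 < c by rewrite sqrtr_gt0.
have c2 : c ^+ 2 = g by rewrite sqr_sqrtr // ltW.
set T := m%:R * beta; pose B := m%:R * `|L|.
have B_ge0 : 0 <= B by rewrite mulr_ge0.
pose A := escape_threshold c T (M * B) (1 + c).
have A_gt0 : 0 < A.
  by rewrite /A /escape_threshold lt_max; apply/orP; left; have := mulr_ge0 M_ge0 B_ge0; lra.
exists (A + A / c); split; first by rewrite addr_gt0 ?divr_gt0.
move=> n n_ge0 n_per n_int n_L z2 q0 z2_large q0_le1 zeta zeta_sol zeta0.
have n_le s t : 0 <= s <= t -> t <= T -> Rintegral lebesgue_measure `]s, t] n <= B.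
  move=> st tT; have := Rintegral_periodic_le (ltW beta_gt0) n_ge0 n_per n_int n_L st tT.
  by move/le_trans; apply; rewrite ler_wpM2l // ler_norm.
rewrite -zeta0 in z2_large; have [b1 [b2 A_le]] := saddle_coord_large c_gt0 z2_large.
have T_ge0 : 0 <= T by rewrite /T mulr_ge0 // ltW.
apply: (saddle_coord_rot_of_lt1 (b1 := b1) (b2 := b2) T_ge0 (ltW c_gt0) q0_le1 (lexx _)).
move=> u /[!in_itv] /= u0T.
apply: (saddle_coord_escape zeta_sol c2 F0_le n_ge0 c_gt0 B_ge0 _ n_le A_le) => //.
by move=> s t; exact/integrable_itv_cc_oc/n_int.
Qed.
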